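(* Let $x_1, x_2, \dots$ be a sequence of real observations and let $f_0(\cdot\mid\theta_0)$ and $f_1(\cdot\mid\theta_1)$ be probability densities that are strictly positive at every $x_k$. Put $\ell_k = \log \frac{f_1(x_k\mid\theta_1)}{f_0(x_k\mid\theta_0)}$. Define the CUSUM statistic recursively by $W_0 = 0$ and $W_n = \max(0, W_{n-1}) + \ell_n$ for $n \ge 1$. For $n\ge 0$, define the log generalized likelihood ratio statistic for a temporary change by $$G_n^{\ast} = \max_{0 \le \nu \le N \le n} \ \sum_{k=\nu+1}^{N} \ell_k ,$$ where an empty sum is $0$. Then $G_n^{\ast} = G_n$ for every $n \ge 0$, where $G_0 = 0$ and $G_n = \max(G_{n-1}, W_n)$ for $n \ge 1$.
   Context: The statistic $G_n^{\ast}$ is the logarithm of the generalized likelihood ratio for testing $\mathcal{H}_0$: $x_1,\dots,x_n$ are i.i.d. with density $f_0(\cdot\mid\theta_0)$, against $\mathcal{H}_1$: there exist unknown times $\nu \le N$ such that $x_k$ has density $f_1(\cdot\mid\theta_1)$ for $\nu < k \le N$ and density $f_0(\cdot\mid\theta_0)$ otherwise, all observations independent. The likelihood ratio of $\mathcal{H}_1$ with parameters $(\nu,N)$ to $\mathcal{H}_0$ is $\prod_{k=\nu+1}^{N} f_1(x_k\mid\theta_1)/f_0(x_k\mid\theta_0)$, and $G_n^{\ast}$ is the logarithm of its maximum over $(\nu,N)$. *)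

From Stdlib Require Import Reals.
Open Scope R_scope.

(* Partial sum  \sum_{k=a+1}^{b} l k  (empty, i.e. 0, when b <= a). *)
Fixpoint sum_range (l : nat -> R) (a b : nat) : R :=
  match b with
  | O => 0
  | S b' => if Nat.leb b a then 0 else sum_range l a b' + l b
  end.

Fixpoint max_upto (g : nat -> R) (m : nat) : R :=
  match m with
  | O => g O
  | S m' => Rmax (max_upto g m') (g m)
  end.

Definition llr {Theta : Type} (f0 f1 : Theta -> R -> R) (th0 th1 : Theta)
  (x : nat -> R) (k : nat) : R :=
  ln (f1 th1 (x k) / f0 th0 (x k)).

Fixpoint cusum (l : nat -> R) (n : nat) : R :=
  match n with
  | O => 0
  | S n' => Rmax 0 (cusum l n') + l n
  end.

Fixpoint Grec (l : nat -> R) (n : nat) : R :=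
  match n with
  | O => 0
  | S n' => Rmax (Grec l n') (cusum l n)
  end.

Definition Gstar (l : nat -> R) (n : nat) : R :=
  max_upto (fun N => max_upto (fun nu => sum_range l nu N) N) n.

(* Extending every window (nu, N] by one step adds l (N+1) to each of its sums,
   and the only new window, (N+1, N+1], is empty with sum 0.  Hence the best
   window ending at N satisfies M_(N+1) = max(0, M_N + l (N+1)), which is exactly
   the CUSUM recursion for max(0, W_N).  G*_n is the running maximum of these
   quantities, and since G_n >= 0 the extra 0 is absorbed, giving the recursion
   for G_n.  The argument works for any real sequence l; the positivity of the
   densities is only needed for the log-likelihood ratios to be meaningful. *)

From Stdlib Require Import Reals Lra Lia.
Open Scope R_scope.

Lemma Rplus_max_distr_r (a b c : R) : Rmax (a + c) (b + c) = Rmax a b + c.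
Proof. unfold Rmax; destruct (Rle_dec (a + c) (b + c)), (Rle_dec a b); lra. Qed.

Lemma max_upto_ext (g h : nat -> R) (m : nat) :
  (forall i, (i <= m)%nat -> g i = h i) -> max_upto g m = max_upto h m.
Proof.
  induction m as [|m IH]; intros Hgh; simpl.
  - apply Hgh; lia.
  - rewrite IH, (Hgh (S m)); [reflexivity | lia | intros; apply Hgh; lia].
Qed.

Lemma max_upto_plus_r (g : nat -> R) (c : R) (m : nat) :
  max_upto (fun i => g i + c) m = max_upto g m + c.
Proof.
  induction m as [|m IH]; simpl; [reflexivity|].
  rewrite IH; apply Rplus_max_distr_r.
Qed.

Lemma sum_range_nn (l : nat -> R) (a : nat) : sum_range l a a = 0.
Proof. destruct a; simpl; [|rewrite Nat.leb_refl]; reflexivity. Qed.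

Lemma sum_range_Sr (l : nat -> R) (a b : nat) :
  (a <= b)%nat -> sum_range l a (S b) = sum_range l a b + l (S b).
Proof.
  intros Hab.
  change (sum_range l a (S b))
    with (if Nat.leb (S b) a then 0 else sum_range l a b + l (S b)).
  rewrite (proj2 (Nat.leb_gt (S b) a)) by lia; reflexivity.
Qed.

Lemma max_upto_sum_range_cusum (l : nat -> R) (N : nat) :
  max_upto (fun nu => sum_range l nu N) N = Rmax 0 (cusum l N).
Proof.
  induction N as [|N IH].
  - simpl; rewrite Rmax_left; lra.
  - change (Rmax (max_upto (fun nu => sum_range l nu (S N)) N)
                 (sum_range l (S N) (S N)) = Rmax 0 (Rmax 0 (cusum l N) + l (S N))).
    rewrite sum_range_nn,
      (max_upto_ext _ (fun nu => sum_range l nu N + l (S N)))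
      by (intros; apply sum_range_Sr; lia).
    rewrite max_upto_plus_r, IH; apply Rmax_comm.
Qed.

Lemma Grec_nonneg (l : nat -> R) (n : nat) : 0 <= Grec l n.
Proof.
  induction n as [|n IH]; simpl; [lra|].
  eapply Rle_trans; [apply IH | apply Rmax_l].
Qed.

Lemma Grec_max_upto (l : nat -> R) (n : nat) :
  Grec l n = max_upto (fun N => Rmax 0 (cusum l N)) n.
Proof.
  induction n as [|n IH].
  - simpl; rewrite Rmax_left; lra.
  - simpl; rewrite <- IH, Rmax_assoc, (Rmax_left (Grec l n) 0)
      by apply Grec_nonneg.
    reflexivity.
Qed.

Lemma Gstar_Grec (l : nat -> R) (n : nat) : Gstar l n = Grec l n.
Proof.
  unfold Gstar; rewrite Grec_max_upto.
  apply max_upto_ext; intros N _; apply max_upto_sum_range_cusum.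
Qed.

Theorem proposition1 (Theta : Type) (f0 f1 : Theta -> R -> R) (th0 th1 : Theta)
  (x : nat -> R)
  (hpos0 : forall k : nat, (1 <= k)%nat -> 0 < f0 th0 (x k))
  (hpos1 : forall k : nat, (1 <= k)%nat -> 0 < f1 th1 (x k)) :
  forall n : nat,
    Gstar (llr f0 f1 th0 th1 x) n = Grec (llr f0 f1 th0 th1 x) n.
Proof. intros n; apply Gstar_Grec. Qed.
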